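(* Let $p$ be a prime, let $N,K,T,M,h$ be positive integers with $T\ge 1$ and $K\mid M$, and let $\beta_1,\ldots,\beta_{K+T}\in\mathbb{F}_p$ be pairwise distinct and $\alpha_1,\ldots,\alpha_N\in\mathbb{F}_p$ be pairwise distinct with $\{\alpha_1,\ldots,\alpha_N\}\cap\{\beta_1,\ldots,\beta_{K+T}\}=\emptyset$. For $k\in[K+T]$ let $L_k(x)=\prod_{\ell\in[K+T]\setminus\{k\}}\frac{x-\beta_\ell}{\beta_k-\beta_\ell}$. For each client $n\in[N]$ let $D_n,d_n$ be positive integers and let $\overline{X}_n=(\overline{X}_n^i)_{i\in[D_n]}$ with $\overline{X}_n^i\in\mathbb{F}_p^{M\times d_n}$ and $\overline{W}_n=(\overline{W}_n^i)_{i\in[D_n]}$ with $\overline{W}_n^i\in\mathbb{F}_p^{d_n\times h}$ be random variables (private data and model of client $n$); for $k\in[K]$ let $\overline{X}_{n,k}^i$ be the $k$-th block of $M/K$ consecutive rows of $\overline{X}_n^i$. Let all mask matrices $Z_{n,k}^i\in\mathbb{F}_p^{(M/K)\times d_n}$ and $V_{n,k}^i\in\mathbb{F}_p^{d_n\times h}$ ($n\in[N]$, $i\in[D_n]$, $k=K+1,\ldots,K+T$) be uniformly distributed, mutually independent, and independent of all data and models. Define $$F_n^i(x)=\sum_{k=1}^K\overline{X}_{n,k}^iL_k(x)+\sum_{k=K+1}^{K+T}Z_{n,k}^iL_k(x),\qquad G_n^i(x)=\sum_{k=1}^K\overline{W}_{n}^iL_k(x)+\sum_{k=K+1}^{K+T}V_{n,k}^iL_k(x).$$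 Fix a batch $\mathcal{B}\subseteq[M/K]$ of row indices, write $A^{(\mathcal{B})}$ for the rows of $A$ indexed by $\mathcal{B}$, and for each $n'\in[N]$ let $$\widetilde{H}_{n'}^{(\mathcal{B})}=\sum_{m=1}^N\sum_{i=1}^{D_m}F_m^{i}(\alpha_{n'})^{(\mathcal{B})}\,G_m^i(\alpha_{n'})$$ be the result uploaded by client $n'$ to the server. Then for every $n\in[N]$, $I\big(\widetilde{H}_n^{(\mathcal{B})};(\overline{X}_n,\overline{W}_n)\big)=0$, where $I$ denotes mutual information.
   Context: This is the privacy guarantee of the FedVS protocol for split vertical federated learning against a curious server: clients secret-share their quantized data and quantized polynomial-network models via Lagrange coded computing (partition parameter $K$, privacy parameter $T$) and each client uploads only its homomorphically computed coded embedding. $[N]=\{1,\ldots,N\}$. *)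

From mathcomp Require Import all_boot all_algebra.
From mathcomp Require Import reals exp.
Set Implicit Arguments. Unset Strict Implicit. Unset Printing Implicit Defensive.
Import GRing.Theory Num.Theory.
Local Open Scope ring_scope.

(** Finite probability space: a probability mass function P on a finite
    sample space Omega.  Random variables are functions out of Omega. *)
Definition is_distr (R : realType) (Omega : finType) (P : Omega -> R) : Prop :=
  (forall w, 0 <= P w) /\ \sum_(w : Omega) P w = 1.

Definition Pr (R : realType) (Omega : finType) (P : Omega -> R) (E : pred Omega) : R :=
  \sum_(w : Omega | E w) P w.

(** Mutual information I(X;Y) = sum_{a,b} p(a,b) log (p(a,b) / (p(a) p(b)))
    with the convention 0 log 0 = 0 (natural logarithm). *)
Definition mutual_info (R : realType) (Omega : finType) (P : Omega -> R)
    (A B : finType) (X : Omega -> A) (Y : Omega -> B) : R :=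
  \sum_(a : A) \sum_(b : B)
    (let pab := Pr P [pred w | (X w == a) && (Y w == b)] in
     let pa := Pr P [pred w | X w == a] in
     let pb := Pr P [pred w | Y w == b] in
     if pab == 0 then 0 else pab * ln (pab / (pa * pb))).

Definition lagrange_basis (F : fieldType) (n : nat) (beta : 'I_n -> F)
    (k : 'I_n) (x : F) : F :=
  \prod_(l < n | l != k) ((x - beta l) / (beta k - beta l)).

Lemma block_idx_lt (M K : nat) (k : 'I_K) (r : 'I_(M %/ K)) :
  (k * (M %/ K) + r < M)%N.
Proof.
have hr := ltn_ord r; have hk := ltn_ord k.
apply: (@leq_trans (k.+1 * (M %/ K))).
  by rewrite mulSn addnC ltn_add2r.
apply: (@leq_trans (K * (M %/ K))); first by rewrite leq_mul2r hk orbT.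
by rewrite mulnC leq_trunc_div.
Qed.

(** k-th block (0-based) of M/K consecutive rows of an M x d matrix. *)
Definition row_block (F : fieldType) (M K d : nat) (A : 'M[F]_(M, d)) (k : 'I_K)
  : 'M[F]_(M %/ K, d) :=
  rowsub (fun r : 'I_(M %/ K) => Ordinal (block_idx_lt k r)) A.

(** A^(B): the rows of A indexed by the batch B (in increasing order). *)
Definition batch_rows (F : fieldType) (m d : nat) (B : {set 'I_m}) (A : 'M[F]_(m, d))
  : 'M[F]_(#|B|, d) :=
  rowsub (fun r : 'I_#|B| => enum_val r) A.

Definition coded_data (F : fieldType) (K T M d : nat) (beta : 'I_(K + T) -> F)
    (Xb : 'M[F]_(M, d)) (Zs : 'I_T -> 'M[F]_(M %/ K, d)) (x : F) : 'M[F]_(M %/ K, d) :=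
  \sum_(k < K) lagrange_basis beta (lshift T k) x *: row_block Xb k
  + \sum_(t < T) lagrange_basis beta (rshift K t) x *: Zs t.

Definition coded_model (F : fieldType) (K T d h : nat) (beta : 'I_(K + T) -> F)
    (Wb : 'M[F]_(d, h)) (Vs : 'I_T -> 'M[F]_(d, h)) (x : F) : 'M[F]_(d, h) :=
  \sum_(k < K) lagrange_basis beta (lshift T k) x *: Wb
  + \sum_(t < T) lagrange_basis beta (rshift K t) x *: Vs t.

(* As alpha n is not an interpolation node, the coefficient of the first
   mask at alpha n is nonzero, so any change of the data of all clients is compensated
   by translating the first masks, and this translation is a bijection of the mask
   space.  Hence every value of the data is mapped to a given upload by equally many
   masks; with uniform masks independent of the data, the upload is independent of
   the data and the mutual information vanishes. *)

From mathcomp Require Import all_boot all_algebra.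
From mathcomp Require Import reals exp.
Set Implicit Arguments. Unset Strict Implicit. Unset Printing Implicit Defensive.
Import GRing.Theory Num.Theory.
Local Open Scope ring_scope.

Section FiniteProbability.
Variables (R : realType) (Omega : finType) (P : Omega -> R).

Lemma eq_Pr (E1 E2 : pred Omega) : E1 =1 E2 -> Pr P E1 = Pr P E2.
Proof. exact: eq_bigl. Qed.

Lemma Pr_comp (A : finType) (U : Omega -> A) (E : pred A) :
  Pr P [pred o | E (U o)] = \sum_(a | E a) Pr P [pred o | U o == a].
Proof.
rewrite /Pr (partition_big U E) //; apply: eq_bigr => a Ea.
by apply: eq_bigl => o /=; case: (U o =P a) => [->|]; rewrite ?Ea ?andbF.
Qed.

Lemma sum_Pr_eq (A : finType) (U : Omega -> A) :
  is_distr P -> \sum_a Pr P [pred o | U o == a] = 1.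
Proof. by case=> _ <-; rewrite -(Pr_comp U predT). Qed.

Lemma Pr_partition (A : finType) (U : Omega -> A) (E : pred Omega) :
  Pr P E = \sum_a Pr P [pred o | E o && (U o == a)].
Proof. exact: partition_big. Qed.

Lemma eq_mutual_info (A B : finType) (X1 X2 : Omega -> A) (Y1 Y2 : Omega -> B) :
  X1 =1 X2 -> Y1 =1 Y2 -> mutual_info P X1 Y1 = mutual_info P X2 Y2.
Proof.
move=> eX eY; apply: eq_bigr => a _; apply: eq_bigr => b _ /=.
rewrite (@eq_Pr [pred o | X1 o == a] [pred o | X2 o == a]) => [|o]; last by rewrite /= eX.
rewrite (@eq_Pr [pred o | Y1 o == b] [pred o | Y2 o == b]) => [|o]; last by rewrite /= eY.
rewrite (@eq_Pr _ [pred o | (X2 o == a) && (Y2 o == b)]) // => o.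
by rewrite /= eX eY.
Qed.

Lemma mutual_info_indep (A B : finType) (X : Omega -> A) (Y : Omega -> B) :
  (forall a b, Pr P [pred o | (X o == a) && (Y o == b)]
               = Pr P [pred o | X o == a] * Pr P [pred o | Y o == b]) ->
  mutual_info P X Y = 0.
Proof.
move=> indep; apply: big1 => a _; apply: big1 => b _ /=.
by rewrite indep; case: eqP => // /eqP pab_neq0; rewrite divff // ln1 mulr0.
Qed.

Section Masking.
Variables (A S C Y : finType) (Dat : Omega -> A) (Msk : Omega -> S).
Variables (f : A -> S -> Y) (g : A -> C) (c : R) (q : Y -> nat).
Hypothesis masks_uniform_indep :
  forall a s, Pr P [pred o | (Dat o == a) && (Msk o == s)] = Pr P [pred o | Dat o == a] * c.
Hypothesis fiber_card : forall a y, #|[set s | f a s == y]| = q y.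

Lemma Pr_masked y b :
  Pr P [pred o | (f (Dat o) (Msk o) == y) && (g (Dat o) == b)]
  = Pr P [pred o | g (Dat o) == b] * c *+ q y.
Proof.
rewrite (@eq_Pr _ [pred o | (g (Dat o) == b) && (f (Dat o) (Msk o) == y)]);
  last by move=> o; rewrite /= andbC.
rewrite (Pr_comp (fun o => (Dat o, Msk o)) [pred ds | (g ds.1 == b) && (f ds.1 ds.2 == y)]).
rewrite -(pair_big_dep (fun a => g a == b) (fun a s => f a s == y)
  (fun a s => Pr P [pred o | (Dat o, Msk o) == (a, s)])) /=.
rewrite (Pr_comp Dat (fun a => g a == b)) mulr_suml -sumrMnl; apply: eq_bigr => a _.
under eq_bigr do rewrite masks_uniform_indep.
rewrite (eq_bigl [in [set s | f a s == y]]) => [|s]; last by rewrite inE.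
by rewrite /= sumr_const fiber_card.
Qed.

Lemma mutual_info_masked : is_distr P ->
  mutual_info P (fun o => f (Dat o) (Msk o)) (fun o => g (Dat o)) = 0.
Proof.
move=> Pdistr; apply: mutual_info_indep => y b.
have marginal : Pr P [pred o | f (Dat o) (Msk o) == y] = c *+ q y.
  rewrite (Pr_partition (fun o => g (Dat o))).
  under eq_bigr do rewrite Pr_masked.
  by rewrite sumrMnl -mulr_suml sum_Pr_eq ?mul1r.
by rewrite Pr_masked marginal mulrnAl [c * _]mulrC.
Qed.
End Masking.
End FiniteProbability.

Section LagrangeMasks.
Variable F : fieldType.

Lemma lagrange_basis_neq0 n (beta : 'I_n -> F) k x :
  injective beta -> (forall l, x != beta l) -> lagrange_basis beta k x != 0.
Proof.
move=> beta_inj x_notin; apply/prodf_neq0 => l l_neq_k.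
rewrite mulf_neq0 ?invr_eq0 ?subr_eq0 //.
by apply: contra l_neq_k => /eqP/beta_inj ->.
Qed.

Lemma lincomb_mask_shift (V : lmodType F) K T (a : 'I_K -> F) (b : 'I_T -> F)
    (u u' : 'I_K -> V) (z : 'I_T -> V) t0 :
  b t0 != 0 ->
  \sum_k a k *: u k + \sum_t b t *: z t
  = \sum_k a k *: u' k
    + \sum_t b t *: (z t + (t == t0)%:R *: ((b t0)^-1 *: \sum_k a k *: (u k - u' k))).
Proof.
move=> bt0_neq0; set w := _^-1 *: _.
have mask_t0 : \sum_t b t *: ((t == t0)%:R *: w) = b t0 *: w.
  rewrite (bigD1 t0) //= eqxx scale1r big1 ?addr0 // => t /negbTE ->.
  by rewrite scale0r scaler0.
rewrite (eq_bigr _ (fun t _ => scalerDr _ _ _)) big_split /= mask_t0.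
rewrite /w scalerA divff // scale1r (eq_bigr _ (fun k _ => scalerBr _ _ _)) sumrB.
by rewrite addrCA subrKC addrC.
Qed.

Definition mask_offset (V : lmodType F) (K T : nat) (beta : 'I_(K + T) -> F)
    (t0 : 'I_T) (x : F) (u : 'I_K -> V) : V :=
  (lagrange_basis beta (rshift K t0) x)^-1 *: \sum_k lagrange_basis beta (lshift T k) x *: u k.

Variables (K T : nat) (beta : 'I_(K + T) -> F).

Lemma eq_coded_data M d (X : 'M[F]_(M, d)) (Z Z' : 'I_T -> 'M[F]_(M %/ K, d)) x :
  Z =1 Z' -> coded_data beta X Z x = coded_data beta X Z' x.
Proof. by move=> eZ; congr (_ + _); apply: eq_bigr => t _; rewrite eZ. Qed.

Lemma eq_coded_model d h (W : 'M[F]_(d, h)) (V V' : 'I_T -> 'M[F]_(d, h)) x :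
  V =1 V' -> coded_model beta W V x = coded_model beta W V' x.
Proof. by move=> eV; congr (_ + _); apply: eq_bigr => t _; rewrite eV. Qed.

Lemma coded_data_mask_shift M d (X X' : 'M[F]_(M, d)) (Z : 'I_T -> 'M[F]_(M %/ K, d)) t0 x :
  lagrange_basis beta (rshift K t0) x != 0 ->
  coded_data beta X Z x
  = coded_data beta X' (fun t => Z t + (t == t0)%:R *:
      mask_offset beta t0 x (fun k => row_block X k - row_block X' k)) x.
Proof. exact: lincomb_mask_shift. Qed.

Lemma coded_model_mask_shift d h (W W' : 'M[F]_(d, h)) (V : 'I_T -> 'M[F]_(d, h)) t0 x :
  lagrange_basis beta (rshift K t0) x != 0 ->
  coded_model beta W V x
  = coded_model beta W' (fun t => V t + (t == t0)%:R *:
      mask_offset beta t0 x (fun _ : 'I_K => W - W')) x.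
Proof. exact: lincomb_mask_shift. Qed.

End LagrangeMasks.

Section Upload.
Variables (F : finFieldType) (N K T M h : nat) (D d : 'I_N -> nat).
Variables (beta : 'I_(K + T) -> F) (B : {set 'I_(M %/ K)}).

Definition client_data :=
  {dffun forall m : 'I_N, {ffun 'I_(D m) -> 'M[F]_(M, d m) * 'M[F]_(d m, h)}}.

Definition client_masks :=
  {dffun forall m : 'I_N,
     {ffun 'I_(D m) -> {ffun 'I_T -> 'M[F]_(M %/ K, d m) * 'M[F]_(d m, h)}}}.

Definition upload (x : F) (dl : client_data) (sg : client_masks) : 'M[F]_(#|B|, h) :=
  \sum_(m < N) \sum_(i < D m)
    batch_rows B (coded_data beta (dl m i).1 (fun t => (sg m i t).1) x)
    *m coded_model beta (dl m i).2 (fun t => (sg m i t).2) x.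

Definition mask_shift (x : F) (t0 : 'I_T) (dl dl' : client_data) (sg : client_masks)
    : client_masks :=
  [ffun m => [ffun i => [ffun t =>
    ((sg m i t).1 + (t == t0)%:R *:
       mask_offset beta t0 x (fun k => row_block (dl m i).1 k - row_block (dl' m i).1 k),
     (sg m i t).2 + (t == t0)%:R *:
       mask_offset beta t0 x (fun _ : 'I_K => (dl m i).2 - (dl' m i).2))]]].

Lemma mask_shift_inj x t0 dl dl' : injective (mask_shift x t0 dl dl').
Proof.
move=> sg sg' /ffunP e; apply/ffunP => m; apply/ffunP => i; apply/ffunP => t.
move/ffunP/(_ i)/ffunP/(_ t): (e m); rewrite !ffunE.
by case: (sg m i t) (sg' m i t) => [z v] [z' v'] [/addIr -> /addIr ->].
Qed.

Lemma upload_mask_shift x t0 dl dl' sg :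
  lagrange_basis beta (rshift K t0) x != 0 ->
  upload x dl sg = upload x dl' (mask_shift x t0 dl dl' sg).
Proof.
move=> L_t0_neq0; apply: eq_bigr => m _; apply: eq_bigr => i _.
rewrite (coded_data_mask_shift _ (dl' m i).1 _ L_t0_neq0).
rewrite (coded_model_mask_shift _ (dl' m i).2 _ L_t0_neq0).
by congr (batch_rows _ _ *m _); [apply: eq_coded_data | apply: eq_coded_model];
  move=> t; rewrite !ffunE.
Qed.

Lemma card_upload_fiber x t0 dl dl' y :
  lagrange_basis beta (rshift K t0) x != 0 ->
  #|[set sg | upload x dl sg == y]| = #|[set sg | upload x dl' sg == y]|.
Proof.
move=> L_t0_neq0; rewrite -[RHS](card_preimset _ (@mask_shift_inj x t0 dl dl')).
by apply: eq_card => sg; rewrite !inE (@upload_mask_shift x t0 dl dl' sg L_t0_neq0).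
Qed.

End Upload.

Section RandomClientData.
Variables (F : finFieldType) (N K T M h : nat) (D d : 'I_N -> nat) (Omega : finType).
Variables (X : forall (n : 'I_N) (i : 'I_(D n)), Omega -> 'M[F]_(M, d n))
          (W : forall (n : 'I_N) (i : 'I_(D n)), Omega -> 'M[F]_(d n, h))
          (Z : forall (n : 'I_N) (i : 'I_(D n)) (t : 'I_T), Omega -> 'M[F]_(M %/ K, d n))
          (V : forall (n : 'I_N) (i : 'I_(D n)) (t : 'I_T), Omega -> 'M[F]_(d n, h)).
Arguments X : clear implicits. Arguments W : clear implicits.
Arguments Z : clear implicits. Arguments V : clear implicits.

Definition data_of (o : Omega) : client_data F M h D d :=
  [ffun m => [ffun i => (X m i o, W m i o)]].

Definition masks_of (o : Omega) : client_masks F K T M h D d :=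
  [ffun m => [ffun i => [ffun t => (Z m i t o, V m i t o)]]].

Lemma data_of_eqE o dl :
  (data_of o == dl)
  = [forall m : 'I_N, forall i : 'I_(D m),
       (X m i o == (dl m i).1) && (W m i o == (dl m i).2)].
Proof.
apply/eqP/forallP => [<- m | e]; first by apply/forallP => i; rewrite !ffunE !eqxx.
apply/ffunP => m; apply/ffunP => i; rewrite !ffunE.
by case/forallP/(_ i)/andP: (e m) => /eqP -> /eqP ->; case: (dl m i).
Qed.

Lemma masks_of_eqE o sg :
  (masks_of o == sg)
  = [forall m : 'I_N, forall i : 'I_(D m), forall t,
       (Z m i t o == (sg m i t).1) && (V m i t o == (sg m i t).2)].
Proof.
apply/eqP/forallP => [<- m | e].
  by apply/forallP => i; apply/forallP => t; rewrite !ffunE !eqxx.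
apply/ffunP => m; apply/ffunP => i; apply/ffunP => t; rewrite !ffunE.
by case/forallP/(_ i)/forallP/(_ t)/andP: (e m) => /eqP -> /eqP ->; case: (sg m i t).
Qed.

Lemma upload_of (beta : 'I_(K + T) -> F) (B : {set 'I_(M %/ K)}) x o :
  upload beta B x (data_of o) (masks_of o)
  = \sum_(m < N) \sum_(i < D m)
      batch_rows B (coded_data beta (X m i o) (fun t => Z m i t o) x)
      *m coded_model beta (W m i o) (fun t => V m i t o) x.
Proof.
apply: eq_bigr => m _; apply: eq_bigr => i _; rewrite !ffunE /=.
by congr (batch_rows _ _ *m _); [apply: eq_coded_data | apply: eq_coded_model];
  move=> t; rewrite !ffunE.
Qed.

End RandomClientData.

Theorem theorem3 (R : realType) (p N K T M h : nat)
  (D d : 'I_N -> nat)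
  (beta : 'I_(K + T) -> 'F_p) (alpha : 'I_N -> 'F_p)
  (Omega : finType) (P : Omega -> R)
  (X : forall (n : 'I_N) (i : 'I_(D n)), Omega -> 'M['F_p]_(M, d n))
  (W : forall (n : 'I_N) (i : 'I_(D n)), Omega -> 'M['F_p]_(d n, h))
  (Z : forall (n : 'I_N) (i : 'I_(D n)) (t : 'I_T), Omega -> 'M['F_p]_(M %/ K, d n))
  (V : forall (n : 'I_N) (i : 'I_(D n)) (t : 'I_T), Omega -> 'M['F_p]_(d n, h))
  (B : {set 'I_(M %/ K)}) :
  prime p ->
  (0 < N)%N -> (0 < K)%N -> (1 <= T)%N -> (0 < M)%N -> (0 < h)%N -> (K %| M)%N ->
  (forall n, 0 < D n)%N -> (forall n, 0 < d n)%N ->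
  injective beta -> injective alpha ->
  (forall (n : 'I_N) (k : 'I_(K + T)), alpha n != beta k) ->
  is_distr P ->
  (* the masks are uniform, mutually independent and independent of all
     data and models (jointly) *)
  (forall (x : forall (n : 'I_N) (i : 'I_(D n)), 'M['F_p]_(M, d n))
          (w : forall (n : 'I_N) (i : 'I_(D n)), 'M['F_p]_(d n, h))
          (z : forall (n : 'I_N) (i : 'I_(D n)) (t : 'I_T), 'M['F_p]_(M %/ K, d n))
          (v : forall (n : 'I_N) (i : 'I_(D n)) (t : 'I_T), 'M['F_p]_(d n, h)),
     Pr P [pred o | [forall n : 'I_N, forall i : 'I_(D n),
                       (X n i o == x n i) && (W n i o == w n i)]
                    && [forall n : 'I_N, forall i : 'I_(D n), forall t : 'I_T,
                       (Z n i t o == z n i t) && (V n i t o == v n i t)]]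
     = Pr P [pred o | [forall n : 'I_N, forall i : 'I_(D n),
                       (X n i o == x n i) && (W n i o == w n i)]]
       * \prod_(n : 'I_N) \prod_(i < D n)
           ((#|{: 'M['F_p]_(M %/ K, d n)}|%:R)^-1 * (#|{: 'M['F_p]_(d n, h)}|%:R)^-1) ^+ T) ->
  let H (n' : 'I_N) (o : Omega) : 'M['F_p]_(#|B|, h) :=
    \sum_(m < N) \sum_(i < D m)
      batch_rows B (coded_data beta (X m i o) (fun t => Z m i t o) (alpha n'))
      *m coded_model beta (W m i o) (fun t => V m i t o) (alpha n') in
  let XW (n : 'I_N) (o : Omega) : {ffun 'I_(D n) -> 'M['F_p]_(M, d n) * 'M['F_p]_(d n, h)} :=
    [ffun i => (X n i o, W n i o)] in
  forall n : 'I_N, mutual_info P (H n) (XW n) = 0.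
Proof.
move=> _ _ _ T_gt0 _ _ _ _ _ beta_inj _ alpha_notin_beta Pdistr masks_indep H XW n.
pose t0 : 'I_T := Ordinal T_gt0.
have L_t0_neq0 : lagrange_basis beta (rshift K t0) (alpha n) != 0.
  exact: lagrange_basis_neq0.
rewrite (@eq_mutual_info _ _ P _ _ _
  (fun o => upload beta B (alpha n) (data_of X W o) (masks_of Z V o))
  _ (fun o => data_of X W o n)); last 2 first.
- by move=> o; rewrite upload_of.
- by move=> o; rewrite ffunE.
pose dl0 : client_data 'F_p M h D d := [ffun m => [ffun i => 0]].
apply: (@mutual_info_masked _ _ P _ _ _ _ (data_of X W) (masks_of Z V) _
  (fun dl => dl n) _ (fun y => #|[set sg | upload beta B (alpha n) dl0 sg == y]|))
  => [dl sg | dl y |].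
- rewrite (eq_Pr P (fun o => congr2 andb (data_of_eqE X W o dl) (masks_of_eqE Z V o sg))).
  by rewrite (eq_Pr P (data_of_eqE X W ^~ dl)); apply: masks_indep.
- exact: card_upload_fiber L_t0_neq0.
- exact: Pdistr.
Qed.
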